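(* Let $A$ be a Hopf $R$-algebroid. The following statements are equivalent: (i) $S(\mathrm{Prim}(A))=\mathrm{Prim}(A)$; (ii) $S(\mathrm{Prim}(A))\subseteq\mathrm{Prim}(A)$; (iii) $S(X)=-X$ for every $X\in\mathrm{Prim}(A)$.
   Context: Let $k$ be a field and $R$ a commutative, associative, not necessarily unital $k$-algebra. A Hopf $R$-algebroid is a $k$-algebra $A$ together with the following data: - $R$ is a commutative (not necessarily central) subalgebra of $A$, and $A$ has local units in $R$ (for finitely many elements of $A$ there is $\eta\in R$ with $\eta a=a\eta=a$ for each of them); - a left $R$-coalgebra structure on $A$, with comultiplication $\Delta\colon A\to A\otimes^{ll}_R A$ (tensor product of left $R$-modules) and counit $\epsilon\colon A\to R$; - a $k$-linear involution $S\colon A\to A$ (the antipode). These satisfy: (i) $\epsilon|_R=\mathrm{id}$, and $\Delta|_R$ is the canonical embedding $R\subset A\otimes^{ll}_RA$; (ii) $\Delta(A)$ lies in the algebra of elements of $A\otimes^{ll}_RA$ on which the two right $R$-actions coincide; (iii) $\epsilon(ab)=\epsilon(a\epsilon(b))$ and $\Delta(ab)=\Delta(a)\Delta(b)$; (iv) $S|_R=\mathrm{id}$ and $S(ab)=S(b)S(a)$; (v) $\mu_A\circ(S\otimes\mathrm{id})\circ\Delta=\epsilon\circ S$, where $\mu_A\colon A\otimes_R^{rl}A\to A$ is the multiplication. An element $a\in A$ is primitive if $\Delta(a)=\eta\otimes a+a\otimes\eta$ for some $\eta\in A$ with $\eta a=a\eta=a$. The left $R$-module of primitive elements is denoted $\mathrm{Prim}(A)$.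 *)

From HB Require Import structures.
From mathcomp Require Import all_boot all_algebra.
Set Implicit Arguments. Unset Strict Implicit. Unset Printing Implicit Defensive.
Import GRing.Theory.
Local Open Scope ring_scope.

(* Hopf R-algebroids over a field k, with R a commutative, not necessarily
   unital subalgebra of a not necessarily unital k-algebra A.
   Tensor products over R are given by their universal property. *)

Definition lin (k : fieldType) (U V : lmodType k) (f : U -> V) : Prop :=
  forall (c : k) (u v : U), f (c *: u + v) = c *: f u + f v.

Section Defs.
Variables (k : fieldType) (A : lmodType k) (mul : A -> A -> A) (R : {pred A}).

Definition bilin (W : lmodType k) (f : A -> A -> W) : Prop :=
  (forall a, lin (f a)) /\ (forall b, lin (fun a => f a b)).

Definition trilin (W : lmodType k) (f : A -> A -> A -> W) : Prop :=
  (forall a b, lin (f a b)) /\ (forall a c, lin (fun b => f a b c))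
  /\ (forall b c, lin (fun a => f a b c)).

Definition balanced (W : lmodType k) (f : A -> A -> W) : Prop :=
  forall r a b, r \in R -> f (mul r a) b = f a (mul r b).

Definition balanced3 (W : lmodType k) (f : A -> A -> A -> W) : Prop :=
  forall r a b c, r \in R ->
    f (mul r a) b c = f a (mul r b) c /\ f a (mul r b) c = f a b (mul r c).

(* T with tens is the tensor product A (x)^{ll}_R A of left R-modules *)
Definition is_tensor2 (T : lmodType k) (tens : A -> A -> T) : Prop :=
  [/\ bilin tens, balanced tens,
      (forall (W : lmodType k) (f : A -> A -> W), bilin f -> balanced f ->
         exists g : T -> W, lin g /\ forall a b, g (tens a b) = f a b)
    & (forall (W : lmodType k) (g h : T -> W), lin g -> lin h ->
         (forall a b, g (tens a b) = h (tens a b)) -> forall t, g t = h t)].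

Definition is_tensor3 (T3 : lmodType k) (tens3 : A -> A -> A -> T3) : Prop :=
  [/\ trilin tens3, balanced3 tens3,
      (forall (W : lmodType k) (f : A -> A -> A -> W), trilin f -> balanced3 f ->
         exists g : T3 -> W, lin g /\ forall a b c, g (tens3 a b c) = f a b c)
    & (forall (W : lmodType k) (g h : T3 -> W), lin g -> lin h ->
         (forall a b c, g (tens3 a b c) = h (tens3 a b c)) -> forall t, g t = h t)].

Record hopf_algebroid (T : lmodType k) (tens : A -> A -> T)
    (T3 : lmodType k) (tens3 : A -> A -> A -> T3)
    (Delta : A -> T) (eps : A -> A) (S : A -> A) : Prop := {
  ha_mul_bilin : bilin mul;
  ha_mul_assoc : associative mul;
  ha_R0 : 0 \in R;
  ha_R_sub : forall (c : k) r s, r \in R -> s \in R -> c *: r + s \in R;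
  ha_R_mul : forall r s, r \in R -> s \in R -> mul r s \in R;
  ha_R_comm : forall r s, r \in R -> s \in R -> mul r s = mul s r;
  ha_local_units : forall s : seq A, exists2 eta, eta \in R &
      forall a, a \in s -> mul eta a = a /\ mul a eta = a;
  ha_tensor2 : is_tensor2 tens;
  ha_tensor3 : is_tensor3 tens3;
  ha_Delta_lin : lin Delta;
  ha_eps_lin : lin eps;
  ha_eps_R : forall a, eps a \in R;
  ha_Delta_Rlin : forall r (lr : T -> T), r \in R -> lin lr ->
      (forall x y, lr (tens x y) = tens (mul r x) y) ->
      forall a, Delta (mul r a) = lr (Delta a);
  ha_eps_Rlin : forall r a, r \in R -> eps (mul r a) = mul r (eps a);
  ha_coassoc : forall (L : A -> T -> T3) (Rr : A -> T -> T3) (D1 D2 : T -> T3),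
      (forall c, lin (L c) /\ forall x y, L c (tens x y) = tens3 x y c) ->
      (forall a, lin (Rr a) /\ forall y z, Rr a (tens y z) = tens3 a y z) ->
      lin D1 -> (forall a b, D1 (tens a b) = L b (Delta a)) ->
      lin D2 -> (forall a b, D2 (tens a b) = Rr a (Delta b)) ->
      forall a, D1 (Delta a) = D2 (Delta a);
  ha_counit_l : forall g : T -> A, lin g ->
      (forall x y, g (tens x y) = mul (eps x) y) -> forall a, g (Delta a) = a;
  ha_counit_r : forall g : T -> A, lin g ->
      (forall x y, g (tens x y) = mul (eps y) x) -> forall a, g (Delta a) = a;
  ha_eps_on_R : forall r, r \in R -> eps r = r;
  ha_Delta_on_R : forall r eta, r \in R -> eta \in R -> mul eta r = r ->
      Delta r = tens r eta;
  (* (ii) Delta lands in the Takeuchi product *)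
  ha_takeuchi : forall r (rho1 rho2 : T -> T), r \in R -> lin rho1 -> lin rho2 ->
      (forall x y, rho1 (tens x y) = tens (mul x r) y) ->
      (forall x y, rho2 (tens x y) = tens x (mul y r)) ->
      forall a, rho1 (Delta a) = rho2 (Delta a);
  ha_eps_mul : forall a b, eps (mul a b) = eps (mul a (eps b));
  ha_Delta_mul : forall (Rm : A -> A -> T -> T),
      (forall c d, lin (Rm c d) /\
         forall x y, Rm c d (tens x y) = tens (mul x c) (mul y d)) ->
      forall a b (M : T -> T), lin M ->
      (forall c d, M (tens c d) = Rm c d (Delta a)) ->
      Delta (mul a b) = M (Delta b);
  ha_S_lin : lin S;
  ha_S_invol : forall a, S (S a) = a;
  ha_S_R : forall r, r \in R -> S r = r;
  ha_S_mul : forall a b, S (mul a b) = mul (S b) (S a);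
  (* (v) mu_A o (S (x) id) o Delta = eps o S *)
  ha_antipode : forall m : T -> A, lin m ->
      (forall x y, m (tens x y) = mul (S x) y) ->
      forall a, m (Delta a) = eps (S a)
}.

Definition primitive (T : lmodType k) (tens : A -> A -> T) (Delta : A -> T)
    (X : A) : Prop :=
  exists2 eta, eta \in R &
    [/\ mul eta X = X, mul X eta = X & Delta X = tens eta X + tens X eta].

End Defs.

(** The counit vanishes on primitive elements: applying the counit axiom to
    [Delta X = eta (x) X + X (x) eta] gives [X = X + eps X * eta], and
    [eps X * eta = eta * eps X = eps (eta X) = eps X].  If [S X] is primitive
    as well, the antipode axiom applied to [X] gives
    [S eta * X + S X * eta = eps (S X) = 0], i.e. [X + S X = 0].  Conversely
    [-X] is primitive whenever [X] is, and since [S] is an involution,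
    [S] maps [Prim A] into itself iff it maps it onto itself. *)
From mathcomp Require Import all_boot all_algebra.
Set Implicit Arguments. Unset Strict Implicit.
Import GRing.Theory.
Local Open Scope ring_scope.

Section Linear.
Variables (k : fieldType) (U V : lmodType k) (f : U -> V).
Hypothesis f_lin : lin f.

Lemma linD u v : f (u + v) = f u + f v.
Proof. by have := f_lin 1 u v; rewrite !scale1r. Qed.

Lemma lin0 : f 0 = 0.
Proof. by apply: (addrI (f 0)); rewrite -linD !addr0. Qed.

Lemma linN u : f (- u) = - f u.
Proof. by have := f_lin (-1) u 0; rewrite addr0 lin0 addr0 !scaleN1r. Qed.

End Linear.

Lemma involutive_image_stable_iff (A : Type) (S : A -> A) (P : A -> Prop) :
    involutive S ->
  (forall y, P y <-> exists2 x, P x & y = S x) <-> (forall x, P x -> P (S x)).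
Proof.
move=> SK; split=> [PSimage x Px | PS y].
  by apply/PSimage; exists x.
split=> [Py | [x Px ->]]; last exact: PS.
by exists (S y); [exact: PS | rewrite SK].
Qed.

Section Primitive.
Variables (k : fieldType) (A : lmodType k) (mul : A -> A -> A) (R : {pred A}).
Variables (T : lmodType k) (tens : A -> A -> T).
Variables (T3 : lmodType k) (tens3 : A -> A -> A -> T3).
Variables (Delta : A -> T) (eps : A -> A) (S : A -> A).
Hypothesis HA : hopf_algebroid mul R tens tens3 Delta eps S.

Local Notation primitive := (primitive mul R tens Delta).

Lemma tensor_lift (f : A -> A -> A) :
    bilin f -> balanced mul R f ->
  exists2 g : T -> A, lin g & forall a b, g (tens a b) = f a b.
Proof.
case: (ha_tensor2 HA) => _ _ univ _ f_bilin f_bal.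
by have [g [g_lin gE]] := univ A f f_bilin f_bal; exists g.
Qed.

Lemma bilin_mul_compl (f : A -> A) : lin f -> bilin (fun a b => mul (f a) b).
Proof.
have [mul_l mul_r] := ha_mul_bilin HA.
move=> f_lin; split=> [a | b]; first exact: mul_l.
by move=> c u v /=; rewrite f_lin; apply: mul_r.
Qed.

Lemma eps_primitive X : primitive X -> eps X = 0.
Proof.
case=> eta etaR [etaX _ DeltaX].
have eps_mul_balanced : balanced mul R (fun a b => mul (eps a) b).
  move=> r a b rR /=.
  rewrite (ha_eps_Rlin HA) // (ha_R_comm HA rR (ha_eps_R HA a)).
  by rewrite (ha_mul_assoc HA).
have [g g_lin gE] :=
  tensor_lift (bilin_mul_compl (ha_eps_lin HA)) eps_mul_balanced.
have := ha_counit_l HA g_lin gE X.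
rewrite DeltaX linD // !gE (ha_eps_on_R HA etaR) etaX => XE.
have eps_eta : mul (eps X) eta = 0 by apply: (addrI X); rewrite XE addr0.
by rewrite -etaX (ha_eps_Rlin HA) // (ha_R_comm HA etaR (ha_eps_R HA X)).
Qed.

Lemma primitiveN X : primitive X -> primitive (- X).
Proof.
case=> eta etaR [etaX Xeta DeltaX]; exists eta => //.
have [mul_l mul_r] := ha_mul_bilin HA.
have [[tens_l tens_r] _ _ _] := ha_tensor2 HA.
split; first by rewrite (linN (mul_l eta)) etaX.
  by rewrite (linN (mul_r eta)) Xeta.
rewrite (linN (ha_Delta_lin HA)) DeltaX opprD.
by rewrite (linN (tens_l eta)) (linN (tens_r eta)).
Qed.

Lemma antipode_primitive X : primitive X -> primitive (S X) -> S X = - X.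
Proof.
move=> PX /eps_primitive epsSX; case: PX => eta etaR [etaX _ DeltaX].
have S_mul_balanced : balanced mul R (fun a b => mul (S a) b).
  by move=> r a b rR /=; rewrite (ha_S_mul HA) (ha_S_R HA rR) (ha_mul_assoc HA).
have [m m_lin mE] :=
  tensor_lift (bilin_mul_compl (ha_S_lin HA)) S_mul_balanced.
have := ha_antipode HA m_lin mE X.
rewrite epsSX DeltaX linD // !mE (ha_S_R HA etaR) etaX.
have -> : mul (S X) eta = S X.
  by rewrite -{2}etaX (ha_S_mul HA) (ha_S_R HA etaR).
by move=> sum0; apply/eqP; rewrite -addr_eq0 addrC sum0.
Qed.

End Primitive.

Theorem mainTheorem2 (k : fieldType) (A : lmodType k) (mul : A -> A -> A)
    (R : {pred A}) (T : lmodType k) (tens : A -> A -> T)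
    (T3 : lmodType k) (tens3 : A -> A -> A -> T3)
    (Delta : A -> T) (eps : A -> A) (S : A -> A)
    (HA : hopf_algebroid mul R tens tens3 Delta eps S) :
  ((forall y, primitive mul R tens Delta y <->
               exists2 x, primitive mul R tens Delta x & y = S x)
   <-> (forall x, primitive mul R tens Delta x -> primitive mul R tens Delta (S x)))
  /\
  ((forall x, primitive mul R tens Delta x -> primitive mul R tens Delta (S x))
   <-> (forall x, primitive mul R tens Delta x -> S x = - x)).
Proof.
split; first exact/involutive_image_stable_iff/(ha_S_invol HA).
split=> [PS X PX | SN X PX].
  exact: (antipode_primitive HA PX (PS X PX)).
by rewrite SN //; exact: (primitiveN HA PX).
Qed.
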